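(* Given a fair division instance with $3$ agents, $4$ items, and normalised additive valuations, an EQ $+$ EQ1 allocation may not exist.
   Context: Fair division of indivisible goods among agents with additive valuations $v_i$. Valuations are normalised if every agent assigns the same value to the full set of items. An (integral) allocation $A=(A_1,\dots,A_n)$ is EQ1 (equitable up to one good) if for every pair of agents $i,j$ with $A_i\neq\emptyset$ there is a good $g\in A_i$ with $v_i(A_i\setminus\{g\})\le v_j(A_j)$. An EQ $+$ EQ1 allocation is a randomized allocation (a probability distribution over integral allocations) that is ex ante equitable, i.e. all agents have equal expected value $\mathbb{E}[v_i(X_i)]$, and whose support consists only of EQ1 integral allocations. *)

From mathcomp Require Import all_boot all_order all_algebra.
Set Implicit Arguments. Unset Strict Implicit. Unset Printing Implicit Defensive.
Import Order.TTheory GRing.Theory Num.Theory.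
Local Open Scope ring_scope.

Definition val (R : numDomainType) (n m : nat) (v : 'I_n -> 'I_m -> R)
  (i : 'I_n) (S : {set 'I_m}) : R := \sum_(g in S) v i g.

Definition nonneg_vals (R : numDomainType) (n m : nat) (v : 'I_n -> 'I_m -> R) :=
  forall i g, 0 <= v i g.

Definition normalised (R : numDomainType) (n m : nat) (v : 'I_n -> 'I_m -> R) :=
  forall i j, val v i setT = val v j setT.

Definition allocation (n m : nat) := {ffun 'I_m -> 'I_n}.

Definition bundle (n m : nat) (a : allocation n m) (i : 'I_n) : {set 'I_m} :=
  [set g | a g == i].

Definition EQ1 (R : numDomainType) (n m : nat) (v : 'I_n -> 'I_m -> R)
  (a : allocation n m) : Prop :=
  forall i j, bundle a i != set0 ->
    exists2 g, g \in bundle a i &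
      val v i (bundle a i :\ g) <= val v j (bundle a j).

Definition distribution (R : numDomainType) (n m : nat)
  (p : {ffun allocation n m -> R}) : Prop :=
  (forall a, 0 <= p a) /\ \sum_a p a = 1.

Definition expected_val (R : numDomainType) (n m : nat) (v : 'I_n -> 'I_m -> R)
  (p : {ffun allocation n m -> R}) (i : 'I_n) : R :=
  \sum_a p a * val v i (bundle a i).

Definition EQ_EQ1 (R : numDomainType) (n m : nat) (v : 'I_n -> 'I_m -> R)
  (p : {ffun allocation n m -> R}) : Prop :=
  [/\ distribution p,
      (forall i j, expected_val v p i = expected_val v p j) &
      (forall a, 0 < p a -> EQ1 v a)].

From Pilot Require Import Defs.
From mathcomp Require Import all_boot all_order all_algebra.
Set Implicit Arguments. Unset Strict Implicit. Unset Printing Implicit Defensive.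
Import Order.TTheory GRing.Theory Num.Theory.

(* Agent 0 values the four items (4, 2, 4, 2) and agents 1 and 2 both value
   them (1, 3, 1, 7), so every agent's total is 12.  Going through the 3^4
   allocations shows that u1 + u2 - 2 u0 > 0 in every EQ1 allocation.  For an
   EQ + EQ1 lottery the expectation of u1 + u2 - 2 u0 is 0 by ex ante equity,
   yet it is the expectation of a quantity positive on the whole support. *)

Section Lotteries.
Local Open Scope ring_scope.

Lemma expectation_gt0 (R : numDomainType) (T : finType) (p f : T -> R) :
  (forall a, 0 <= p a) -> \sum_a p a = 1 -> (forall a, 0 < p a -> 0 < f a) ->
  0 < \sum_a p a * f a.
Proof.
move=> p_ge0 p_sum1 f_gt0.
have pf_ge0 a : 0 <= p a * f a.
  have := p_ge0 a; rewrite le0r => /predU1P[->|pa_gt0]; first by rewrite mul0r.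
  by rewrite ltW ?mulr_gt0 ?f_gt0.
have [a /andP[_ pa_gt0]] : exists a, true && (0 < p a).
  by apply: psumr_neq0P => //; rewrite p_sum1; apply/eqP; rewrite oner_eq0.
rewrite (bigD1 a) //= ltr_pwDl ?sumr_ge0 // mulr_gt0 ?f_gt0 //.
Qed.

Lemma no_EQ_EQ1_of_weighted_gap (R : numDomainType) (n m : nat)
    (v : 'I_n -> 'I_m -> R) (c : 'I_n -> R) :
  \sum_i c i = 0 ->
  (forall a, EQ1 v a -> 0 < \sum_i c i * Defs.val v i (bundle a i)) ->
  ~ exists p, EQ_EQ1 v p.
Proof.
move=> c_sum0 gap_gt0 [p [[p_ge0 p_sum1] EQ_p EQ1_supp]].
have weighted_E0 : \sum_i c i * expected_val v p i = 0.
  have [i0 _ | no_agent] := pickP (@predT 'I_n); last by rewrite big_pred0.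
  under eq_bigr do rewrite (EQ_p _ i0).
  by rewrite -mulr_suml c_sum0 mul0r.
have := expectation_gt0 p_ge0 p_sum1
  (fun a pa_gt0 => gap_gt0 a (EQ1_supp a pa_gt0)).
under eq_bigr do rewrite mulr_sumr; under eq_bigr do under eq_bigr do rewrite mulrCA.
by rewrite exchange_big /=; under eq_bigr do rewrite -mulr_sumr; rewrite weighted_E0 ltxx.
Qed.

End Lotteries.

Definition worth (i g : nat) : nat :=
  nth 0 (nth [::] [:: [:: 4; 2; 4; 2]; [:: 1; 3; 1; 7]; [:: 1; 3; 1; 7]] i) g.

Definition share (o : nat -> nat) (i : nat) : nat :=
  sumn [seq (o g == i) * worth i g | g <- iota 0 4].

(* An allocation is encoded by its owner map o (item g goes to agent o g).
   The subtraction below never truncates, as g is owned by i. *)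
Definition EQ1_owners (o : nat -> nat) : bool :=
  all (fun i => all (fun j =>
      has (fun g => o g == i) (iota 0 4) ==>
      has (fun g => (o g == i) && (share o i - worth i g <= share o j)) (iota 0 4))
    (iota 0 3)) (iota 0 3).

Lemma EQ1_owners_gap (o : nat -> nat) :
  (forall g, o g < 3) -> EQ1_owners o -> 2 * share o 0 < share o 1 + share o 2.
Proof.
move=> o_lt3; apply/implyP; move: (o_lt3 0) (o_lt3 1) (o_lt3 2) (o_lt3 3).
rewrite /EQ1_owners /share /=.
by case: (o 0) => [|[|[|?]]] //; case: (o 1) => [|[|[|?]]] //;
   case: (o 2) => [|[|[|?]]] //; case: (o 3) => [|[|[|?]]].
Qed.

Definition owners (a : allocation 3 4) (g : nat) : nat := a (inord g).

Lemma share_owners (a : allocation 3 4) (i : 'I_3) :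
  share (owners a) i = \sum_(g in bundle a i) worth i g.
Proof.
rewrite /share sumnE big_map -[iota 0 4]/(index_iota 0 4) big_mkord.
rewrite [RHS]big_mkcond.
apply: eq_bigr => g _; rewrite /owners inord_val val_eqE inE.
by case: (a g == i); rewrite ?mul1n.
Qed.

Local Open Scope ring_scope.

Definition vals (R : numDomainType) (i : 'I_3) (g : 'I_4) : R := (worth i g)%:R.

Lemma val_vals (R : numDomainType) (i : 'I_3) (S : {set 'I_4}) :
  Defs.val (vals R) i S = (\sum_(g in S) worth i g)%:R.
Proof. by rewrite natr_sum. Qed.

Lemma EQ1_owners_vals (R : numDomainType) (a : allocation 3 4) :
  EQ1 (vals R) a -> EQ1_owners (owners a).
Proof.
move=> EQ1a; apply/allP => i; rewrite mem_iota => /andP[_ i_lt3].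
apply/allP => j; rewrite mem_iota => /andP[_ j_lt3].
apply/implyP => /hasP[g _ /eqP owner_g].
pose I := Ordinal i_lt3; pose J := Ordinal j_lt3.
have : bundle a I != set0.
  by apply/set0Pn; exists (inord g); rewrite inE; apply/eqP/val_inj.
case/(EQ1a I J) => h h_in; rewrite !val_vals ler_nat => EQ1_h.
apply/hasP; exists (val h); first by rewrite mem_iota ltn_ord.
move: (h_in); rewrite inE => /eqP owner_h.
rewrite /owners inord_val owner_h eqxx /=.
by rewrite -[i]/(val I) -[j]/(val J) !share_owners (big_setD1 _ h_in) addKn.
Qed.

Definition gap_weight (R : numDomainType) (i : 'I_3) : R := if i == ord0 then -2 else 1.

Lemma sum_gap_weight (R : numDomainType) : \sum_i gap_weight R i = 0.
Proof. by rewrite !big_ord_recl big_ord0 /gap_weight /= addr0 -mulr2n addNr. Qed.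

Lemma EQ1_vals_gap (R : numDomainType) (a : allocation 3 4) :
  EQ1 (vals R) a -> 0 < \sum_i gap_weight R i * Defs.val (vals R) i (bundle a i).
Proof.
move=> EQ1a; have := EQ1_owners_gap (fun g => ltn_ord _) (EQ1_owners_vals EQ1a).
rewrite -(ltr_nat R) natrD natrM => gap.
rewrite !big_ord_recl big_ord0 !val_vals -!share_owners /gap_weight /=.
by rewrite addr0 !mul1r mulNr addrC subr_gt0.
Qed.

Lemma normalised_vals (R : numDomainType) : normalised (vals R).
Proof.
have val_setT (i : 'I_3) : Defs.val (vals R) i setT = 12%:R.
  rewrite val_vals (eq_bigl xpredT) => [|g]; last by rewrite in_setT.
  by rewrite !big_ord_recr big_ord0; case: i => [[|[|[|]]] ?].
by move=> i j; rewrite !val_setT.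
Qed.

Theorem mainTheorem1 (R : realFieldType) :
  exists v : 'I_3 -> 'I_4 -> R,
    [/\ nonneg_vals v, normalised v &
        ~ exists p : {ffun allocation 3 4 -> R}, EQ_EQ1 v p].
Proof.
exists (vals R); split.
- by move=> i g; rewrite ler0n.
- exact: normalised_vals.
- exact: no_EQ_EQ1_of_weighted_gap (sum_gap_weight R) (@EQ1_vals_gap R).
Qed.
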